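(* Let $n$ be a positive integer and let $0 < a_1, a_2, \ldots, a_n \le 1$ be real numbers. Define \[ \alpha = \sum_{j=1}^n \frac{a_j}{1 - \log_2 a_j} - 2\ln 2 . \] Then for every real $\mu$ with $0 < \mu \le 1 - \exp(-\alpha/8)$, there exists a Boolean function $f\colon \{0,1\}^n \to \{0,1\}$ such that \[ \mu \le \mathbb{E}[f(x)] \le \frac{3}{4}\mu + \frac{1}{4} \] and \[ \mathrm{Inf}_j[f] < a_j \quad \text{for all } 1 \le j \le n. \]
   Context: Here $x$ denotes a uniformly random element of $\{0,1\}^n$, and $\mathbb{E}[f(x)]$ is the expectation with respect to it. For $1 \le j \le n$, $x^j$ denotes $x$ with its $j$-th coordinate flipped, i.e. $x^j = (x_1,\dots,x_{j-1},1-x_j,x_{j+1},\dots,x_n)$, and the influence of the $j$-th variable on $f$ is $\mathrm{Inf}_j[f] = \Pr[f(x) \ne f(x^j)]$. $\ln$ is the natural logarithm and $\log_2$ the base-$2$ logarithm. *)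

From mathcomp Require Import all_boot all_order all_algebra.
From mathcomp Require Import all_classical all_reals all_analysis.
Set Implicit Arguments. Unset Strict Implicit. Unset Printing Implicit Defensive.
Import Order.TTheory GRing.Theory Num.Theory.
Local Open Scope ring_scope.

Definition cube (n : nat) := {ffun 'I_n -> bool}.

Definition flip (n : nat) (x : cube n) (j : 'I_n) : cube n :=
  [ffun i => if i == j then ~~ x i else x i].

Definition expect (R : realType) (n : nat) (f : cube n -> bool) : R :=
  (\sum_(x : cube n) (f x)%:R) / (2 ^+ n).

Definition influence (R : realType) (n : nat) (f : cube n -> bool) (j : 'I_n) : R :=
  (#|[set x : cube n | f x != f (flip x j)]|)%:R / (2 ^+ n).

Definition log2 (R : realType) (x : R) : R := ln x / ln 2.

(* Build f as an OR of tribes (ANDs over disjoint blocks of variables), scanning the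
   variables by decreasing a_j: the next variable joins the current tribe P while
   a_j <= 2^-|P|, and otherwise closes it. In a tribe T every influence is at most
   2^(1-|T|) < a_j, the other influences do not grow, and closing T multiplies
   Pr[f = 0] by 1 - 2^-|T| >= 3/4; so the first time Pr[f = 0] drops below 1 - mu it
   lies in [3/4 (1 - mu), 1 - mu]. If that never happens, Pr[f = 0] <= exp(-s) with
   s = sum_T 2^-|T|. The k-th variable of a tribe has a_j <= 2^(1-k), hence weight
   a_j / (1 - log2 a_j) <= 2 / (k 2^k), and sum_k 2 / (k 2^k) = 2 ln 2; charging each
   closing variable to 8 * 2^-|T| gives alpha <= 8 s, contradicting the bound on mu. *)

From mathcomp Require Import all_boot all_order all_algebra.
From mathcomp Require Import all_classical all_reals all_analysis.
From mathcomp Require Import ring lra.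
Import Order.TTheory GRing.Theory Num.Theory.
Set Implicit Arguments. Unset Strict Implicit. Unset Printing Implicit Defensive.

Section Cube.
Variable n : nat.
Implicit Types (x : cube n) (f g : cube n -> bool) (S T : {set 'I_n}) (i j : 'I_n).

Lemma flipK j : involutive (fun x : cube n => flip x j).
Proof. by move=> x; apply/ffunP => i; rewrite !ffunE; case: eqP; rewrite ?negbK. Qed.

Lemma flip_neq x j i : i != j -> flip x j i = x i.
Proof. by rewrite ffunE => /negPf ->. Qed.

Lemma flip_eq x j : flip x j j = ~~ x j.
Proof. by rewrite ffunE eqxx. Qed.

Definition ignores f j := forall x, f (flip x j) = f x.

Definition ones_on S x := [forall i in S, x i].

Lemma ones_on_flip S x j : j \notin S -> ones_on S (flip x j) = ones_on S x.
Proof.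
move=> jS; apply: eq_forallb_in => i iS; rewrite flip_neq //.
by apply: contraNneq jS => <-.
Qed.

Lemma ones_on0 x : ones_on finset.set0 x.
Proof. by apply/forall_inP => i; rewrite inE. Qed.

Lemma ones_onD1 S j x : j \in S -> ones_on S x = x j && ones_on (S :\ j) x.
Proof.
move=> jS; apply/forall_inP/andP => [H|[xj /forall_inP H] i iS].
  by split; [exact: H | apply/forall_inP => i /setD1P[_]; apply: H].
by case: (eqVneq i j) => [->//|ij]; apply: H; rewrite !inE ij.
Qed.

Lemma ignores_or_ones_on f T j : ignores f j -> j \notin T ->
  ignores (fun x => f x || ones_on T x) j.
Proof. by move=> fj jT x; rewrite fj ones_on_flip. Qed.

Lemma card_ignores f j : ignores f j -> #|f| = #|[pred x | f x && x j]|.*2.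
Proof.
move=> fj; rewrite -addnn -(cardID [pred x : cube n | x j] f); congr (_ + _).
rewrite -(fintype.card_image (can_inj (flipK j))); apply: eq_card => x.
apply/mapP/andP => [[y]|[fx xj]].
  by rewrite mem_enum !inE => /andP[yj fy] ->; rewrite fj flip_eq.
exists (flip x j); last by rewrite flipK.
by rewrite mem_enum !inE flip_eq xj unfold_in /= fj.
Qed.

Lemma card_and_ones_on f S : (forall j, j \in S -> ignores f j) ->
  (#|[pred x | f x && ones_on S x]| * 2 ^ #|S| = #|f|)%N.
Proof.
move Hk : #|S| => k; elim: k f S Hk => [|k IH] f S Hk fS.
  move: Hk => /cards0_eq ->; rewrite muln1; apply: eq_card => x.
  by rewrite !inE ones_on0 andbT.
have /card_gt0P[j jS] : (0 < #|S|)%N by rewrite Hk.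
have Hk' : #|S :\ j| = k by move: Hk; rewrite (cardsD1 j S) jS add1n => -[].
set g := fun x => f x && ones_on (S :\ j) x.
have gj : ignores g j by move=> x; rewrite /g fS // ones_on_flip // !inE eqxx.
rewrite expnS mulnA -(IH f (S :\ j)) //; last by move=> i /setD1P[_]; apply: fS.
have -> : #|[pred x | f x && ones_on (S :\ j) x]| = #|g| by apply: eq_card.
rewrite (card_ignores gj) -muln2; congr (_ * _ * _).
by apply: eq_card => x; rewrite !inE /g (ones_onD1 x jS) -andbA (andbC (x j)).
Qed.

Lemma card_ones_on S : (#|[set x | ones_on S x]| * 2 ^ #|S| = 2 ^ n)%N.
Proof.
have <- : #|{: cube n}| = 2 ^ n by rewrite card_ffun card_bool card_ord.
rewrite -(card_and_ones_on (f := predT) (S := S)) //.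
by congr (_ * _); apply: eq_card => x; rewrite !inE.
Qed.

Lemma card_flips_or_out f T j : j \notin T ->
  (#|[set x | (f x || ones_on T x) != (f (flip x j) || ones_on T (flip x j))]|
    <= #|[set x | f x != f (flip x j)]|)%N.
Proof.
move=> jT; apply: subset_leq_card; apply/fintype.subsetP => x.
by rewrite !inE ones_on_flip //; apply: contra => /eqP ->.
Qed.

Lemma card_flips_or_in f T j :
  (forall i, i \in T -> ignores f i) -> j \in T ->
  (#|[set x | (f x || ones_on T x) != (f (flip x j) || ones_on T (flip x j))]|
    <= #|[set x | ones_on (T :\ j) x]|)%N.
Proof.
move=> fT jT; apply: subset_leq_card; apply/fintype.subsetP => x; rewrite !inE.
apply: contraR => /negPf Tx.
by rewrite (fT j jT) !(ones_onD1 _ jT) ones_on_flip ?Tx ?andbF // !inE eqxx.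
Qed.

End Cube.

Local Open Scope ring_scope.

Section Probability.
Variables (R : realType) (n : nat).
Implicit Types (f g : cube n -> bool) (S T : {set 'I_n}) (j : 'I_n).

Lemma pow2_gt0 (k : nat) : 0 < (2 : R) ^+ k.
Proof. exact: exprn_gt0. Qed.

Lemma expect_card f : expect R f = #|f|%:R / 2 ^+ n.
Proof.
rewrite /expect -sum1_card natr_sum; congr (_ / _).
by rewrite [RHS]big_mkcond; apply: eq_bigr => x _; rewrite unfold_in; case: (f x).
Qed.

Lemma expect_split f g :
  expect R f = expect R (fun x => f x && g x) + expect R (fun x => f x && ~~ g x).
Proof.
rewrite !expect_card -mulrDl -natrD -(cardID g); congr (_%:R / _).
by congr (_ + _)%N; apply: eq_card => x; rewrite !inE unfold_in /= // andbC.
Qed.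

Lemma expect1 : expect R (fun _ : cube n => true) = 1.
Proof.
rewrite expect_card card_ffun card_bool card_ord natrX.
by rewrite divff // gt_eqF ?pow2_gt0.
Qed.

Lemma expectN f : expect R (fun x => ~~ f x) = 1 - expect R f.
Proof. by rewrite -expect1 [X in X - _](expect_split _ f) /= addrC addKr. Qed.

Lemma expect_and_ones_on f S : (forall j, j \in S -> ignores f j) ->
  expect R (fun x => f x && ones_on S x) = expect R f / 2 ^+ #|S|.
Proof.
move=> fS; rewrite !expect_card -(card_and_ones_on fS) natrM natrX.
rewrite mulrAC mulfK ?gt_eqF ?pow2_gt0 //; congr (_%:R / _).
Qed.

Lemma expect_and_not_ones_on f S : (forall j, j \in S -> ignores f j) ->
  expect R (fun x => f x && ~~ ones_on S x) = expect R f * (1 - (2 ^+ #|S|)^-1).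
Proof.
move=> fS; rewrite mulrBr mulr1 -expect_and_ones_on // (expect_split f (ones_on S)).
by rewrite addrAC subrr add0r.
Qed.

Lemma expect_ge0 f : 0 <= expect R f.
Proof. by rewrite expect_card divr_ge0 // ltW ?pow2_gt0. Qed.

Definition zero_prob f := expect R (fun x => ~~ f x).

Lemma expectE_zero_prob f : expect R f = 1 - zero_prob f.
Proof. by rewrite /zero_prob expectN opprB addrC subrK. Qed.

Lemma zero_prob_or_ones_on f T : (forall j, j \in T -> ignores f j) ->
  zero_prob (fun x => f x || ones_on T x) = zero_prob f * (1 - (2 ^+ #|T|)^-1).
Proof.
move=> fT; rewrite /zero_prob -expect_and_not_ones_on => [|j jT x]; last by rewrite fT.
by congr expect; apply: funext => x; rewrite negb_or.
Qed.

Lemma influence_ignores f j : ignores f j -> influence R f j = 0.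
Proof.
move=> fj; rewrite /influence (_ : [set x | _] = finset.set0) ?cards0 ?mul0r //.
by apply/setP => x; rewrite !inE fj eqxx.
Qed.

Lemma influence_or_out f T j : j \notin T ->
  influence R (fun x => f x || ones_on T x) j <= influence R f j.
Proof.
move=> jT; rewrite /influence ler_pM2r ?invr_gt0 ?pow2_gt0 // ler_nat.
exact: card_flips_or_out.
Qed.

Lemma influence_or_in f T j : (forall i, i \in T -> ignores f i) -> j \in T ->
  influence R (fun x => f x || ones_on T x) j <= 2 / 2 ^+ #|T|.
Proof.
move=> fT jT; rewrite /influence ler_pdivrMr ?pow2_gt0 //.
apply: le_trans (_ : #|[set x | ones_on (T :\ j) x]|%:R <= _).
  by rewrite ler_nat; exact: card_flips_or_in.
have cardT : #|T| = (#|T :\ j|).+1 by rewrite (cardsD1 j T) jT.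
have /(congr1 (GRing.natmul (1 : R))) := card_ones_on (T :\ j).
rewrite natrM !natrX cardT exprS => <-.
by rewrite [leRHS](_ : _ = #|[set x | ones_on (T :\ j) x]|%:R) //; field; rewrite gt_eqF ?pow2_gt0.
Qed.

End Probability.

Section LnSeries.
Variables (R : realType) (N : nat).

(* [G] is nondecreasing on (0, 1], since G' y = (1 - y)^N / y, and G 1 = 0. *)
Let G : R -> R :=
  (@ln R : R -> R) + \sum_(i < N) (i.+1%:R)^-1 \*: ((cst 1 - id) ^+ i.+1 : R -> R).

Let G_eval (y : R) : G y = ln y + \sum_(i < N) (i.+1%:R)^-1 * (1 - y) ^+ i.+1.
Proof.
rewrite /G /=; congr (_ + _).
apply: (big_rec2 (fun (g : R -> R) b => g y = b)) => // i g b _ <-.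
by rewrite /= exprfctE.
Qed.

Let G_derive (y : R) : 0 < y -> is_derive y 1 G (y^-1 - \sum_(i < N) (1 - y) ^+ i).
Proof.
move=> y0; apply: is_derive_eq; first exact/is_deriveD/is_derive1_ln.
rewrite -sumrN; congr (_ + _); apply: eq_bigr => i _.
by rewrite /= scalerA mulrA mulVf // mul1r sub0r scalerN; congr (- _); apply: mulr1.
Qed.

Let G_derive_ge0 (y : R) : 0 < y <= 1 -> 0 <= y^-1 - \sum_(i < N) (1 - y) ^+ i.
Proof.
case/andP=> y0 y1.
have geom : y * \sum_(i < N) (1 - y) ^+ i = 1 - (1 - y) ^+ N.
  have := subrX1 (1 - y) N; rewrite addrAC subrr add0r mulNr => E.
  by rewrite -[LHS]opprK -E opprB.
rewrite subr_ge0 -(ler_pM2l y0) mulfV ?gt_eqF // geom lerBlDr lerDl.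
by rewrite exprn_ge0 // subr_ge0.
Qed.

Lemma sum_pow_le_lnV (y : R) : 0 < y <= 1 ->
  \sum_(i < N) (i.+1%:R)^-1 * (1 - y) ^+ i.+1 <= - ln y.
Proof.
case/andP=> y0 y1.
have G_mono : G y <= G 1.
  apply: (@ger0_derive1_ndecr _ G y 1) => //.
  - by move=> x; rewrite in_itv /= => /andP[yx _]; have [] := G_derive (lt_trans y0 yx).
  - move=> x; rewrite in_itv /= => /andP[yx x1]; have x0 := lt_trans y0 yx.
    rewrite derive1E; have [_ ->] := G_derive x0; apply: G_derive_ge0.
    by rewrite x0 ltW.
  - apply: derivable_within_continuous => x; rewrite in_itv /= => /andP[yx _].
    by have [] := G_derive (lt_le_trans y0 yx).
have G1 : G 1 = 0.
  by rewrite G_eval ln1 add0r big1 // => i _; rewrite subrr expr0n mulr0.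
rewrite G1 G_eval in G_mono.
by rewrite -lerBrDl sub0r in G_mono.
Qed.

End LnSeries.

Section Weights.
Variable R : realType.
Implicit Types (x y : R) (t : nat).

Definition weight x := x / (1 - log2 x).

Definition level_weight t : R := 2 / (2 ^+ t * t%:R).

Lemma ln2_gt0 : 0 < ln (2 : R).
Proof. by apply: ln_gt0; rewrite ltr1n. Qed.

Lemma log2_le x y : 0 < x -> x <= y -> log2 x <= log2 y.
Proof.
move=> x0 xy; rewrite /log2 ler_pM2r ?invr_gt0 ?ln2_gt0 //.
by rewrite ler_ln // posrE (lt_le_trans x0).
Qed.

Lemma log2_le0 x : 0 < x -> x <= 1 -> log2 x <= 0.
Proof.
by move=> x0 x1; rewrite /log2 pmulr_lle0 ?invr_gt0 ?ln2_gt0 // ln_le0.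
Qed.

Lemma weight_le x y : 0 < x -> x <= y -> y <= 1 -> weight x <= weight y.
Proof.
move=> x0 xy y1; have y0 := lt_le_trans x0 xy.
have Dy : 1 <= 1 - log2 y by rewrite lerDl oppr_ge0 log2_le0.
have Dxy : 1 - log2 y <= 1 - log2 x by rewrite lerD2l lerN2 log2_le.
have Dx0 : 0 < 1 - log2 x by apply: lt_le_trans Dxy; apply: lt_le_trans Dy.
apply: (@le_trans _ _ (y / (1 - log2 x))); first by rewrite ler_wpM2r // invr_ge0 ltW.
by rewrite ler_wpM2l ?(ltW y0) // lef_pV2 ?posrE // (lt_le_trans _ Dy).
Qed.

Lemma weight_level t : (1 <= t)%N -> weight (2 / 2 ^+ t) = level_weight t.
Proof.
move=> t1; have log2t : log2 (2 / 2 ^+ t : R) = 1 - t%:R.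
  rewrite /log2 lnM ?posrE ?invr_gt0 ?pow2_gt0 // lnV ?posrE ?pow2_gt0 //.
  by rewrite lnXn //; field; rewrite gt_eqF ?ln2_gt0.
by rewrite /weight log2t opprB addrC subrK /level_weight invfM mulrA.
Qed.

Lemma weight_le_level t x : (1 <= t)%N -> 0 < x -> x <= 2 / 2 ^+ t ->
  weight x <= level_weight t.
Proof.
move=> t1 x0 xt; rewrite -weight_level // weight_le //.
rewrite ler_pdivrMr ?pow2_gt0 // mul1r.
by rewrite -[X in X <= _]expr1 ler_eXn2l // ltr1n.
Qed.

Lemma ler_div_pow2 m k : (m <= k)%N -> 2 / 2 ^+ k <= 2 / 2 ^+ m :> R.
Proof.
move=> mk; rewrite ler_pM2l // lef_pV2 ?posrE ?pow2_gt0 //.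
by rewrite ler_eXn2l // ltr1n.
Qed.

Lemma level_weight_ge0 t : 0 <= level_weight t.
Proof. by rewrite divr_ge0 // mulr_ge0 // ltW ?pow2_gt0. Qed.

Lemma level_weightM t : (1 <= t)%N -> level_weight t * t%:R = 2 / 2 ^+ t.
Proof. by move=> t1; rewrite /level_weight invfM -!mulrA mulVf ?mulr1 // pnatr_eq0 -lt0n. Qed.

Lemma level_weight_le t : level_weight t <= 2 / 2 ^+ t.
Proof.
case: t => [|t]; first by rewrite /level_weight mulr0 invr0 mulr0 divr_ge0 ?pow2_gt0.
by rewrite -level_weightM // ler_peMr ?level_weight_ge0 // ler1n.
Qed.

Definition budget (n c : nat) : R := \sum_(k < n) level_weight (maxn k.+1 c).

Lemma budget_split n c t : (c <= t)%N -> (1 <= t)%N -> (t <= n)%N ->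
  budget n c = \sum_(k < t) level_weight (maxn k.+1 c) + budget n t - 2 / 2 ^+ t.
Proof.
move=> ct t1 tn; rewrite /budget -!(big_mkord xpredT (fun k => level_weight (maxn k.+1 _))).
rewrite !(big_cat_nat (leq0n t) tn) /=.
have -> : \sum_(0 <= k < t) level_weight (maxn k.+1 t) = 2 / 2 ^+ t :> R.
  rewrite (eq_big_nat _ _ (F2 := fun=> level_weight t)) => [|k /andP[_ kt]].
    by rewrite sumr_const_nat subn0 -[_ *+ t]mulr_natr level_weightM.
  by rewrite (maxn_idPr kt).
have -> : \sum_(t <= k < n) level_weight (maxn k.+1 c) =
          \sum_(t <= k < n) level_weight (maxn k.+1 t) :> R.
  apply: eq_big_nat => k /andP[tk _].
  by rewrite (maxn_idPl (leq_trans ct (leqW tk))) (maxn_idPl (leqW tk)).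
lra.
Qed.

Lemma budget1_le_ln2 n : budget n 1 <= 2 * ln (2 : R).
Proof.
have half : 0 < (2^-1 : R) <= 1 by apply/andP; split; lra.
have := sum_pow_le_lnV n half; rewrite lnV ?posrE // opprK.
rewrite -(ler_pM2l (_ : (0 : R) < 2)) // mulr_sumr; apply: le_trans.
rewrite [leRHS](eq_bigr (fun k : 'I_n => level_weight (maxn k.+1 1))) // => k _.
rewrite (maxn_idPl (ltn0Sn k)) /level_weight (_ : 1 - 2^-1 = 2^-1 :> R); last by field.
by rewrite exprVn; field; rewrite addrC natr1 pnatr_eq0 /= gt_eqF ?pow2_gt0.
Qed.

End Weights.

Section Greedy.
Variables (R : realType) (n : nat) (a : 'I_n -> R).
Hypothesis a_range : forall j, 0 < a j <= 1.
Variable q : R.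
Implicit Types (f g : cube n -> bool) (P U : {set 'I_n}) (c : nat) (s : R).

Let a_gt0 j : 0 < a j. Proof. by case/andP: (a_range j). Qed.
Let a_le1 j : a j <= 1. Proof. by case/andP: (a_range j). Qed.

Definition good f :=
  3 / 4 * q <= zero_prob R f <= q /\ forall j, influence R f j < a j.

(* [P] is the tribe being built, [U] the variables not yet placed, [f] the OR of the
   closed tribes, [s] the sum of 2^-|T| over them, and [c] is |T| - 1 for the last
   closed tribe T (1 at the start). *)
Record invariant c P U f s : Prop := Invariant {
  inv_c_gt0 : (0 < c)%N;
  inv_disjoint : [disjoint P & U];
  inv_sorted : forall j i, j \in U -> i \in P -> a j <= a i;
  inv_le_c : forall j, j \in P :|: U -> a j <= 2 / 2 ^+ c;
  inv_le_P : forall j, j \in U -> a j <= 2 / 2 ^+ #|P|;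
  inv_weight : \sum_(j in P) weight (a j) <= \sum_(k < #|P|) level_weight R (maxn k.+1 c);
  inv_ignores : forall j, j \in P :|: U -> ignores f j;
  inv_influence : forall j, j \notin P :|: U -> influence R f j < a j;
  inv_q_lt : q < zero_prob R f;
  inv_le_expR : zero_prob R f <= expR (- s) }.

Definition outcome c (V : {set 'I_n}) s := (exists g, good g) \/
  exists s', q < expR (- s') /\ \sum_(j in V) weight (a j) + 8 * s <= 8 * s' + budget R n c.

Lemma outcome_stop c P f s : invariant c P finset.set0 f s -> outcome c (P :|: finset.set0) s.
Proof.
case=> _ _ _ _ _ wP _ _ qf fs; right; exists s; split; first exact: lt_le_trans fs.
rewrite finset.setU0 addrC lerD2l (le_trans wP) //.
have Pn : (#|P| <= n)%N by rewrite -[X in (_ <= X)%N]card_ord max_card.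
rewrite /budget (big_ord_widen n (fun k => level_weight R (maxn k.+1 c)) Pn) big_mkcond /=.
by apply: ler_sum => k _; case: ifP => // _; apply: level_weight_ge0.
Qed.

Section Step.
Variables (c : nat) (P U : {set 'I_n}) (f : cube n -> bool) (s : R).
Hypothesis inv : invariant c P U f s.
Variable x : 'I_n.
Hypotheses (xU : x \in U) (x_max : forall j, j \in U -> a j <= a x).

Let xP : x \notin P.
Proof. by rewrite (disjointFl (inv_disjoint inv) xU). Qed.

Lemma setU1_setD1 : x |: P :|: U :\ x = P :|: U.
Proof. by apply/setP => j; rewrite !inE; case: eqVneq => // ->; rewrite xU orbT. Qed.

Lemma invariant_extend : a x <= 2 / 2 ^+ #|P|.+1 -> invariant c (x |: P) (U :\ x) f s.
Proof.
case: inv => c0 dPU sorted le_c le_P wP ign infl qf fs ax.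
have cardxP : #|x |: P| = #|P|.+1 by rewrite cardsU1 xP.
split; rewrite ?setU1_setD1 ?cardxP //.
- apply/pred0P => j /=; rewrite !inE; case: eqVneq => //= _.
  by case: (boolP (j \in P)) => // /(disjointFr dPU).
- by move=> j i /setD1P[_ jU] /setU1P[->|iP]; [exact: x_max | exact: sorted].
- by move=> j /setD1P[_ jU]; exact: le_trans (x_max jU) ax.
rewrite (big_setU1 _ xP) big_ord_recr /= addrC lerD // weight_le_level ?leq_max //.
by rewrite /maxn; case: ltnP => _ //; apply: le_c; rewrite inE xU orbT.
Qed.

Let T := x |: P.
Let f' y := f y || ones_on T y.
Let u : R := (2 ^+ #|P|.+1)^-1.

Hypothesis x_big : 2 / 2 ^+ #|P|.+1 < a x.

Let cardT : #|T| = #|P|.+1.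
Proof. by rewrite cardsU1 xP. Qed.

Let P_gt0 : (0 < #|P|)%N.
Proof.
rewrite lt0n; apply: contraTneq x_big => ->.
by rewrite expr1 divff // -leNgt a_le1.
Qed.

Let ignores_T j : j \in T -> ignores f j.
Proof. by move=> jT; apply: (inv_ignores inv); rewrite -setU1_setD1 inE [_ \in T]jT. Qed.

Let u_le : u <= 1 / 4.
Proof.
rewrite mul1r lef_pV2 ?posrE ?pow2_gt0 // (_ : 4 = 2 ^+ 2); last by rewrite expr2; lra.
by rewrite ler_eXn2l ?ltr1n.
Qed.

Lemma close_influence j : j \notin U :\ x -> influence R f' j < a j.
Proof.
move=> jUx; case: (boolP (j \in T)) => jT.
  apply: le_lt_trans (influence_or_in R ignores_T jT) _; rewrite cardT.
  apply: lt_le_trans x_big _; case/setU1P: jT => [->//|jP].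
  exact: (inv_sorted inv xU jP).
apply: le_lt_trans (influence_or_out R f jT) _; apply: (inv_influence inv).
by rewrite -setU1_setD1 inE negb_or jT.
Qed.

Lemma close_zero_prob : zero_prob R f' = zero_prob R f * (1 - u).
Proof. by rewrite /f' zero_prob_or_ones_on // cardT. Qed.

Lemma close_good : zero_prob R f' <= q -> good f'.
Proof.
move=> fq; split.
  rewrite fq andbT close_zero_prob.
  have := inv_q_lt inv; have := expect_ge0 R (fun y => ~~ f y); rewrite -/(zero_prob R f).
  move=> Z0 qZ; have := mulr_ge0 Z0 (_ : 0 <= 1 / 4 - u); rewrite subr_ge0 => /(_ u_le).
  lra.
move=> j; case: (boolP (j \in U :\ x)) => [/setD1P[jx jU]|]; last exact: close_influence.
rewrite influence_ignores //; apply: ignores_or_ones_on.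
  by apply: (inv_ignores inv); rewrite inE jU orbT.
by rewrite !inE negb_or jx (disjointFl (inv_disjoint inv) jU).
Qed.

Lemma invariant_close :
  q < zero_prob R f' -> invariant #|P| finset.set0 (U :\ x) f' (s + u).
Proof.
move=> qf'; split; rewrite ?finset.set0U ?cards0 ?expr0 ?divr1 //.
- by rewrite -setI_eq0 finset.set0I.
- by move=> j i _; rewrite inE.
- by move=> j /setD1P[_ /x_max ajx]; apply: le_trans ajx (inv_le_P inv xU).
- by move=> j _; apply: le_trans (a_le1 j) _; lra.
- by rewrite big_set0 big_ord0.
- move=> j /setD1P[jx jU]; apply: ignores_or_ones_on.
    by apply: (inv_ignores inv); rewrite inE jU orbT.
  by rewrite !inE negb_or jx (disjointFl (inv_disjoint inv) jU).
- exact: close_influence.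
rewrite close_zero_prob opprD expRD ler_pM //.
- exact: expect_ge0.
- by have := u_le; lra.
- exact: (inv_le_expR inv).
by have := expR_ge1Dx (- u); rewrite addrC.
Qed.

Lemma outcome_close : outcome #|P| (finset.set0 :|: U :\ x) (s + u) -> outcome c (P :|: U) s.
Proof.
case=> [|[s' [qs' le_s']]]; [by left | right; exists s'; split => //].
have c_le : (c <= #|P|)%N.
  rewrite -ltnS ltnNge; apply: contraTN x_big => /(ler_div_pow2 R) cP.
  by rewrite -leNgt (le_trans _ cP) // (inv_le_c inv) // inE xU orbT.
have P_lt : (#|P| < n)%N by rewrite -cardT -[X in (_ <= X)%N]card_ord max_card.
rewrite (budget_split _ c_le P_gt0 (ltnW P_lt)).
rewrite finset.set0U in le_s'.
have sumPU : \sum_(j in P :|: U) weight (a j) =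
    \sum_(j in P) weight (a j) + (weight (a x) + \sum_(j in U :\ x) weight (a j)).
  rewrite -(big_setD1 _ xU) -bigU ?(inv_disjoint inv) //.
  by apply: eq_bigl => j; rewrite !inE.
have wx : weight (a x) <= 2 / 2 ^+ #|P|.
  apply: le_trans (level_weight_le R #|P|).
  exact: weight_le_level P_gt0 (a_gt0 x) (inv_le_P inv xU).
have u_eq : 8 * u = 2 * (2 / 2 ^+ #|P|).
  by rewrite /u exprS; field; rewrite gt_eqF ?pow2_gt0.
have := inv_weight inv; lra.
Qed.

End Step.

Lemma invariant_outcome c P U f s : invariant c P U f s -> outcome c (P :|: U) s.
Proof.
move Hk : #|U| => k; elim: k c P U f s Hk => [|k IH] c P U f s Hk inv.
  by move/cards0_eq: Hk inv => -> /outcome_stop.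
have /card_gt0P[x0 x0U] : (0 < #|U|)%N by rewrite Hk.
have [x xU x_max] : exists2 x, x \in U & forall j, j \in U -> a j <= a x.
  by case: (arg_maxP a x0U) => y; exists y.
have Hk' : #|U :\ x| = k by move: Hk; rewrite (cardsD1 x U) xU add1n => -[].
case: (ltrP (2 / 2 ^+ #|P|.+1) (a x)) => ax; last first.
  by rewrite -(setU1_setD1 P xU); apply: IH Hk' (invariant_extend inv xU x_max ax).
case: (lerP (zero_prob R (fun y => f y || ones_on (x |: P) y)) q) => fq.
  by left; exists (fun y => f y || ones_on (x |: P) y); apply: (close_good inv xU ax).
apply: (outcome_close inv xU ax).
exact: IH Hk' (invariant_close inv xU x_max ax fq).
Qed.

Lemma invariant_start : q < 1 -> invariant 1 finset.set0 [set: 'I_n] (fun=> false) 0.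
Proof.
move=> q1; have Z1 : zero_prob R (fun _ : cube n => false) = 1 by exact: expect1.
split; rewrite ?finset.set0U ?cards0 ?expr0 ?expr1 ?divr1 ?divff ?Z1 ?oppr0 ?expR0 //.
- by rewrite -setI_eq0 finset.set0I.
- by move=> j i _; rewrite inE.
- by move=> j _; apply: le_trans (a_le1 j) _; lra.
- by rewrite big_set0 big_ord0.
- by move=> j; rewrite inE.
Qed.

Lemma exists_good : q < 1 ->
  expR (- ((\sum_(j < n) weight (a j) - 2 * ln 2) / 8)) <= q -> exists g, good g.
Proof.
move=> q1 qe; case: (invariant_outcome (invariant_start q1)) => // -[s [qs le_s]].
have : expR (- s) <= expR (- ((\sum_(j < n) weight (a j) - 2 * ln 2) / 8)).
  rewrite ler_expR lerN2 ler_pdivrMr //; have := budget1_le_ln2 R n.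
  move: le_s; rewrite finset.set0U mulr0 addr0.
  rewrite (eq_bigl (fun j => true)) => [|j]; last by rewrite inE.
  lra.
lra.
Qed.

End Greedy.

Theorem theorem1 (R : realType) (n : nat) (hn : (0 < n)%N) (a : 'I_n -> R)
  (ha : forall j, 0 < a j <= 1) (mu : R) :
  let alpha := \sum_(j < n) a j / (1 - log2 (a j)) - 2 * ln 2 in
  0 < mu -> mu <= 1 - expR (- (alpha / 8)) ->
  exists f : cube n -> bool,
    [/\ mu <= expect R f, expect R f <= 3 / 4 * mu + 1 / 4
      & forall j : 'I_n, influence R f j < a j].
Proof.
move=> alpha mu_gt0 mu_le.
have [||g [/andP[g_lo g_hi] g_infl]] := exists_good ha (q := 1 - mu).
- lra.
- by rewrite -/alpha; lra.
by exists g; split; rewrite // expectE_zero_prob; lra.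
Qed.
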